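(* Fix $\alpha \in (0,1/2)$, $m$, $n$. There is $T_0$ such that for all $T \ge T_0$ and every run of Algorithm 1 in which the small gradient assumption holds, for all $i \in [m]$ and $t \in [T]$: (1) $(w_i^t)^\alpha \ge 4\eta\gamma$ and $w_i^t \ge \frac{1}{10\sqrt{m}} T^{1/(2(\alpha-1))}$; (2) $-32 (w_i^t)^{1-\alpha}\eta\gamma \le w_i^t - w_i^{t+1} \le 2 (w_i^t)^{2-\alpha}(m+1)\eta\gamma$.
   Context: Setting. There are $m$ experts and $n$ outcomes; $\Delta^k$ is the probability simplex in $\mathbb{R}^k$. For reports $\mathbf{p}^1,\dots,\mathbf{p}^m\in\Delta^n$ and $\mathbf{w}\in\Delta^m$, the logarithmic pool is $p^*_j(\mathbf{w}) = \frac{\prod_k (p^k_j)^{w_k}}{\sum_{\ell}\prod_k (p^k_\ell)^{w_k}}$. At each time $t\in[T]$, reports $\mathbf{p}^{t,1},\dots,\mathbf{p}^{t,m}$ and an outcome $j_t$ are revealed, with loss $L^t(\mathbf{w}) := -\ln p^*_{j_t}(\mathbf{w})$ and, by convention, $\partial_i L^t(\mathbf{w}) := \sum_{\ell} p^*_\ell(\mathbf{w}) \ln p^{t,i}_\ell - \ln p^{t,i}_{j_t}$. Algorithm 1 (parameter $\alpha \in (0,1/2)$): $R(\mathbf{w}) = -\frac{1}{\alpha}\sum_i w_i^\alpha$, $\eta = \frac{1}{\sqrt{T}\ln T}\cdot\frac{1}{12 m^{(1+\alpha)/2} n}$, $\mathbf{w}^1 = (1/m,\dots,1/m)$, $\eta_0=+\infty$.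 For $t=1,\dots,T$: if $\eta \le \min_i (w_i^t)^\alpha$ set $\eta_t = \min(\eta_{t-1},\eta)$, else $\eta_t = \min(\eta_{t-1}, \min_i w_i^t)$; then $\mathbf{w}^{t+1}\in\Delta^m$ is defined by $-(w_i^{t+1})^{\alpha-1} = -(w_i^t)^{\alpha-1} - \eta_t\partial_i L^t(\mathbf{w}^t) + c$ for all $i$, with $c$ the unique constant making $\sum_i w_i^{t+1}=1$. Let $\gamma := 12 n \ln T$. The small gradient assumption holds for a run if for every $t\in[T]$ and $i\in[m]$: $-\frac{\gamma}{w_i^t} \le \partial_i L^t(\mathbf{w}^t) \le \gamma$. *)

From Stdlib Require Import Reals Lra Lia List.
Import ListNotations.
Open Scope R_scope.

Definition sumR (k : nat) (f : nat -> R) : R :=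
  fold_right Rplus 0 (map f (seq 0 k)).
Definition prodR (k : nat) (f : nat -> R) : R :=
  fold_right Rmult 1 (map f (seq 0 k)).
(* minimum of f 0, ..., f (k-1)  (meaningful for k >= 1) *)
Definition minR (k : nat) (f : nat -> R) : R :=
  fold_right Rmin (f 0%nat) (map f (seq 0 k)).

(* x^a for x >= 0, a > 0, with the convention 0^a = 0. *)
Definition pw (x a : R) : R := if Rle_dec x 0 then 0 else Rpower x a.

(* Reports: p t i l = p^{t,i}_l ; experts i < m, outcomes l < n.
   Logarithmic pool of the reports (p t) with weight vector w. *)
Definition pool (m n : nat) (pt : nat -> nat -> R) (w : nat -> R) (l : nat) : R :=
  prodR m (fun k => pw (pt k l) (w k)) /
  sumR n (fun l' => prodR m (fun k => pw (pt k l') (w k))).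

(* Convention for the partial derivative of the loss L^t at w. *)
Definition dL (m n : nat) (pt : nat -> nat -> R) (jt : nat) (w : nat -> R) (i : nat) : R :=
  sumR n (fun l => pool m n pt w l * ln (pt i l)) - ln (pt i jt).

Definition eta_par (alpha : R) (m n T : nat) : R :=
  (1 / (sqrt (INR T) * ln (INR T))) *
  (1 / (12 * Rpower (INR m) ((1 + alpha) / 2) * INR n)).

Definition gamma_par (n T : nat) : R := 12 * INR n * ln (INR T).

Definition eta_cand (alpha : R) (m n T : nat) (wt : nat -> R) : R :=
  if Rle_dec (eta_par alpha m n T) (minR m (fun i => Rpower (wt i) alpha))
  then eta_par alpha m n T else minR m wt.

(* A run of Algorithm 1 with horizon T: reports p, outcomes j, weights w
   (w t = w^t for t = 1..T+1), step sizes e (e t = eta_t for t = 1..T). *)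
Definition is_run (alpha : R) (m n T : nat)
  (p : nat -> nat -> nat -> R) (j : nat -> nat)
  (w : nat -> nat -> R) (e : nat -> R) : Prop :=
  (forall t, (1 <= t <= T)%nat ->
     (j t < n)%nat /\
     forall i, (i < m)%nat ->
       (forall l, (l < n)%nat -> 0 <= p t i l) /\ sumR n (fun l => p t i l) = 1) /\
  (forall i, (i < m)%nat -> w 1%nat i = 1 / INR m) /\
  (* step sizes, with eta_0 = +infinity *)
  (forall t, (1 <= t <= T)%nat ->
     e t = if Nat.eqb t 1 then eta_cand alpha m n T (w t)
           else Rmin (e (t - 1)%nat) (eta_cand alpha m n T (w t))) /\
  (* mirror-descent update; w^{t+1} in the simplex (positive, as required
     for (w_i^{t+1})^{alpha-1} to be defined) *)
  (forall t, (1 <= t <= T)%nat ->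
     (forall i, (i < m)%nat -> 0 < w (S t) i) /\
     sumR m (fun i => w (S t) i) = 1 /\
     exists c : R, forall i, (i < m)%nat ->
       - Rpower (w (S t) i) (alpha - 1) =
       - Rpower (w t i) (alpha - 1) - e t * dL m n (p t) (j t) (w t) i + c).

(* Small gradient assumption.  The condition 0 < p^{t,i}_{j_t} makes
   d_i L^t finite (it follows from the assumption read in extended reals). *)
Definition small_gradient (m n T : nat)
  (p : nat -> nat -> nat -> R) (j : nat -> nat) (w : nat -> nat -> R) : Prop :=
  forall t i, (1 <= t <= T)%nat -> (i < m)%nat ->
    0 < p t i (j t) /\
    - (gamma_par n T / w t i) <= dL m n (p t) (j t) (w t) i /\
    dL m n (p t) (j t) (w t) i <= gamma_par n T.

From Stdlib Require Import Reals Lra Lia List.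
From Coquelicot Require Import Hierarchy.
Open Scope R_scope.

(* Write [K = eta * gamma] and [L] for the claimed lower bound on the weights.
   In one round the update reads [w'_k^(a-1) = w_k^(a-1) + d_k - c] with
   [-K / w_k <= d_k <= K].  Normalisation pins the shift [c] between
   [-2 K m] and [K], so the potential [w_i^(a-1)] grows by at most
   [K (1 + 2 m)] per round, and the tangent inequality of [t |-> t^(a-1)]
   converts this into the bounds on [w_i - w'_i].  Over the
   whole run the potential stays below [m^(1-a) + T K (1 + 2 m)], which is at
   most [L^(a-1)] for large [T]; hence all weights stay above [L], and there
   [(w_i)^a >= 4 K >= eta], so the step size is always [eta]. *)

Lemma fold_right_Rplus_shift (l : list R) (b : R) :
  fold_right Rplus b l = fold_right Rplus 0 l + b.
Proof. induction l as [|x l IH]; simpl; [lra | rewrite IH; lra]. Qed.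

Lemma sumR_S (k : nat) (f : nat -> R) : sumR (S k) f = sumR k f + f k.
Proof.
  unfold sumR. rewrite seq_S, map_app, fold_right_app. simpl.
  rewrite fold_right_Rplus_shift. lra.
Qed.

Lemma sumR_ext (k : nat) (f g : nat -> R) :
  (forall i, (i < k)%nat -> f i = g i) -> sumR k f = sumR k g.
Proof.
  induction k as [|k IH]; intros Hfg; [reflexivity|].
  rewrite !sumR_S, IH by (intros; apply Hfg; lia). rewrite Hfg by lia. reflexivity.
Qed.

Lemma sumR_le (k : nat) (f g : nat -> R) :
  (forall i, (i < k)%nat -> f i <= g i) -> sumR k f <= sumR k g.
Proof.
  induction k as [|k IH]; intros Hfg; [apply Rle_refl|].
  rewrite !sumR_S. apply Rplus_le_compat; [apply IH; intros; apply Hfg|apply Hfg]; lia.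
Qed.

Lemma sumR_lt (k : nat) (f g : nat -> R) : (1 <= k)%nat ->
  (forall i, (i < k)%nat -> f i < g i) -> sumR k f < sumR k g.
Proof.
  destruct k as [|k]; intros Hk Hfg; [lia|].
  rewrite !sumR_S. apply Rplus_le_lt_compat; [|apply Hfg; lia].
  apply sumR_le. intros; apply Rlt_le, Hfg; lia.
Qed.

Lemma sumR_plus (k : nat) (f g : nat -> R) :
  sumR k (fun i => f i + g i) = sumR k f + sumR k g.
Proof. induction k as [|k IH]; [unfold sumR; simpl; lra | rewrite !sumR_S, IH; lra]. Qed.

Lemma sumR_scal (k : nat) (c : R) (f : nat -> R) :
  sumR k (fun i => c * f i) = c * sumR k f.
Proof. induction k as [|k IH]; [unfold sumR; simpl; lra | rewrite !sumR_S, IH; lra]. Qed.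

Lemma sumR_const (k : nat) (c : R) : sumR k (fun _ => c) = INR k * c.
Proof. induction k as [|k IH]; [unfold sumR; simpl; lra | rewrite sumR_S, IH, S_INR; lra]. Qed.

Lemma sumR_nonneg (k : nat) (f : nat -> R) :
  (forall i, (i < k)%nat -> 0 <= f i) -> 0 <= sumR k f.
Proof.
  intros Hf. rewrite <- (Rmult_0_r (INR k)), <- sumR_const. now apply sumR_le.
Qed.

Lemma sumR_ge_term (k : nat) (f : nat -> R) (i : nat) :
  (forall l, (l < k)%nat -> 0 <= f l) -> (i < k)%nat -> f i <= sumR k f.
Proof.
  induction k as [|k IH]; intros Hf Hi; [lia|]. rewrite sumR_S.
  destruct (Nat.eq_dec i k) as [->|Hne].
  - assert (0 <= sumR k f) by (apply sumR_nonneg; intros; apply Hf; lia). lra.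
  - assert (f i <= sumR k f) by (apply IH; [intros; apply Hf|]; lia).
    assert (0 <= f k) by (apply Hf; lia). lra.
Qed.

Lemma minR_ge (k : nat) (f : nat -> R) (x : R) : (1 <= k)%nat ->
  (forall i, (i < k)%nat -> x <= f i) -> x <= minR k f.
Proof.
  intros Hk Hf. unfold minR.
  assert (Hin : forall i, In i (seq 0 k) -> x <= f i)
    by (intros i Hi; apply in_seq in Hi; apply Hf; lia).
  assert (H0 : x <= f 0%nat) by (apply Hf; lia).
  clear Hf. induction (seq 0 k) as [|i l IH]; simpl; [auto|].
  apply Rmin_glb; [apply Hin; left | apply IH; intros; apply Hin; right]; auto.
Qed.

Lemma exp_ge_tangent (s y : R) : exp s * (1 + (y - s)) <= exp y.
Proof.
  replace (exp y) with (exp s * exp (y - s)) by (rewrite <- exp_plus; f_equal; ring).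
  apply Rmult_le_compat_l; [apply Rlt_le, exp_pos | apply exp_ineq1_le].
Qed.

Lemma ln_le_sub1 (x : R) : 0 < x -> ln x <= x - 1.
Proof. intros Hx. pose proof (exp_ineq1_le (ln x)). rewrite exp_ln in H; lra. Qed.

Lemma Rpower_le_bernoulli (x q : R) : 0 < x -> 0 <= q <= 1 ->
  Rpower x q <= 1 + q * (x - 1).
Proof.
  intros Hx Hq. unfold Rpower.
  (* convexity of exp: [exp 0] and [exp (ln x)] both lie above its tangent at [q ln x] *)
  pose proof (exp_ge_tangent (q * ln x) (ln x)) as Ht1.
  pose proof (exp_ge_tangent (q * ln x) 0) as Ht0.
  rewrite exp_ln in Ht1 by lra. rewrite exp_0 in Ht0.
  nra.
Qed.

Lemma bernoulli_le_Rpower_ge1 (x q : R) : 0 < x -> 1 <= q ->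
  1 + q * (x - 1) <= Rpower x q.
Proof.
  intros Hx Hq. set (y := Rpower x q).
  assert (Hy : Rpower y (/ q) = x)
    by (unfold y; rewrite Rpower_mult, Rinv_r, Rpower_1; lra).
  assert (Hq' : 0 <= / q <= 1)
    by (split; [apply Rlt_le, Rinv_0_lt_compat; lra | rewrite <- Rinv_1; apply Rinv_le_contravar; lra]).
  pose proof (Rpower_le_bernoulli y (/ q) (exp_pos _) Hq') as Hb. rewrite Hy in Hb.
  apply Rmult_le_compat_l with (r := q) in Hb; [|lra].
  replace (q * (1 + / q * (y - 1))) with (q + y - 1) in Hb by (field; lra). nra.
Qed.

Lemma bernoulli_le_Rpower_nonpos (x q : R) : 0 < x -> q <= 0 ->
  1 + q * (x - 1) <= Rpower x q.
Proof.
  intros Hx Hq. unfold Rpower. pose proof (exp_ineq1_le (q * ln x)).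
  pose proof (ln_le_sub1 x Hx). nra.
Qed.

Lemma Rpower_antitone_lt (x y q : R) : q < 0 -> 0 < x -> x < y ->
  Rpower y q < Rpower x q.
Proof.
  intros Hq Hx Hxy. unfold Rpower. apply exp_increasing.
  assert (ln x < ln y) by (apply ln_increasing; lra). nra.
Qed.

Lemma Rpower_antitone_le (x y q : R) : q < 0 -> 0 < x -> x <= y ->
  Rpower y q <= Rpower x q.
Proof.
  intros Hq Hx [Hxy | <-]; [apply Rlt_le, Rpower_antitone_lt | apply Rle_refl]; auto.
Qed.

Lemma Rpower_antitone_lt_inv (x y q : R) : q < 0 -> 0 < y ->
  Rpower y q < Rpower x q -> x < y.
Proof.
  intros Hq Hy H. destruct (Rlt_or_le x y) as [|Hyx]; auto.
  pose proof (Rpower_antitone_le y x q Hq Hy Hyx). lra.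
Qed.

Lemma Rpower_antitone_le_inv (x y q : R) : q < 0 -> 0 < y ->
  Rpower y q <= Rpower x q -> x <= y.
Proof.
  intros Hq Hy H. destruct (Rle_or_lt x y) as [|Hyx]; auto.
  pose proof (Rpower_antitone_lt y x q Hq Hy Hyx). lra.
Qed.

Lemma Rpower_tangent_gap (a u v : R) : a < 1 -> 0 < u -> 0 < v ->
  Rpower v (2 - a) * (Rpower v (a - 1) - Rpower u (a - 1)) <= (1 - a) * (u - v).
Proof.
  intros Ha Hu Hv.
  assert (Hvv : Rpower v (2 - a) * Rpower v (a - 1) = v)
    by (rewrite <- Rpower_plus; replace (2 - a + (a - 1)) with 1 by ring; now apply Rpower_1).
  assert (Hu' : u = v * (u / v)) by (field; lra).
  assert (Hb := bernoulli_le_Rpower_nonpos (u / v) (a - 1)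
                  ltac:(apply Rdiv_lt_0_compat; lra) ltac:(lra)).
  assert (Hvu : Rpower v (2 - a) * Rpower u (a - 1) = v * Rpower (u / v) (a - 1)).
  { rewrite Hu' at 1. rewrite <- Rpower_mult_distr, <- Rmult_assoc, Hvv
      by (try apply Rdiv_lt_0_compat; lra). reflexivity. }
  rewrite Rmult_minus_distr_l, Hvv, Hvu.
  apply Rmult_le_compat_l with (r := v) in Hb; [|lra].
  replace (v * (1 + (a - 1) * (u / v - 1))) with (v + (a - 1) * (u - v)) in Hb
    by (field; lra). lra.
Qed.

Lemma Rpower_simplex_split (k : nat) (y : nat -> R) (q : R) : (1 <= k)%nat ->
  sumR k y = 1 ->
  sumR k (fun i => Rpower (INR k) (- q) * (1 + q * (INR k * y i - 1)))
  = Rpower (INR k) (1 - q).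
Proof.
  intros Hk Hs. assert (Hk0 : 0 < INR k) by (apply lt_0_INR; lia).
  rewrite (sumR_ext _ _ (fun i => Rpower (INR k) (- q) * (1 - q) + (Rpower (INR k) (- q) * q * INR k) * y i))
    by (intros; ring).
  rewrite sumR_plus, sumR_const, sumR_scal, Hs.
  replace (1 - q) with (- q + 1) at 2 by ring.
  rewrite Rpower_plus, Rpower_1 by auto. ring.
Qed.

Lemma Rpower_scale_split (k y q : R) : 0 < k -> 0 < y ->
  Rpower y q = Rpower k (- q) * Rpower (k * y) q.
Proof.
  intros Hk Hy. rewrite <- Rpower_mult_distr, <- Rmult_assoc, <- Rpower_plus by auto.
  replace (- q + q) with 0 by ring. rewrite Rpower_O by auto. ring.
Qed.

Lemma sumR_Rpower_simplex_le (k : nat) (y : nat -> R) (q : R) : (1 <= k)%nat ->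
  (forall i, (i < k)%nat -> 0 < y i) -> sumR k y = 1 -> 0 <= q <= 1 ->
  sumR k (fun i => Rpower (y i) q) <= Rpower (INR k) (1 - q).
Proof.
  intros Hk Hy Hs Hq. assert (Hk0 : 0 < INR k) by (apply lt_0_INR; lia).
  rewrite <- (Rpower_simplex_split k y q Hk Hs). apply sumR_le. intros i Hi.
  rewrite (Rpower_scale_split (INR k) (y i)) by auto. apply Rmult_le_compat_l.
  - apply Rlt_le, exp_pos.
  - apply Rpower_le_bernoulli; [apply Rmult_lt_0_compat; auto | auto].
Qed.

Lemma sumR_Rpower_simplex_ge (k : nat) (y : nat -> R) (q : R) : (1 <= k)%nat ->
  (forall i, (i < k)%nat -> 0 < y i) -> sumR k y = 1 -> 1 <= q ->
  Rpower (INR k) (1 - q) <= sumR k (fun i => Rpower (y i) q).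
Proof.
  intros Hk Hy Hs Hq. assert (Hk0 : 0 < INR k) by (apply lt_0_INR; lia).
  rewrite <- (Rpower_simplex_split k y q Hk Hs). apply sumR_le. intros i Hi.
  rewrite (Rpower_scale_split (INR k) (y i)) by auto. apply Rmult_le_compat_l.
  - apply Rlt_le, exp_pos.
  - apply bernoulli_le_Rpower_ge1; [apply Rmult_lt_0_compat; auto | auto].
Qed.

Lemma Rpower_1_plus_6x_le (x q : R) : 0 <= x <= 1 / 6 -> q <= - (1 / 2) ->
  Rpower (1 + 6 * x) q <= 1 - x.
Proof.
  intros Hx Hq. set (y := 1 + 6 * x).
  apply Rle_trans with (Rpower y (- / 2)); [apply Rle_Rpower; unfold y; lra|].
  rewrite Rpower_Ropp, Rpower_sqrt by (unfold y; lra).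
  assert (0 < sqrt y) by (apply sqrt_lt_R0; unfold y; lra).
  assert (Hs : 1 <= (1 - x) * sqrt y).
  { assert (Hyy : sqrt y * sqrt y = y) by (apply sqrt_sqrt; unfold y; lra).
    assert (Hz : 1 <= ((1 - x) * sqrt y) * ((1 - x) * sqrt y))
      by (replace (((1 - x) * sqrt y) * ((1 - x) * sqrt y))
            with ((1 - x) * (1 - x) * (sqrt y * sqrt y)) by ring;
          rewrite Hyy; unfold y; nra).
    assert (0 < (1 - x) * sqrt y) by (apply Rmult_lt_0_compat; lra).
    nra. }
  apply Rmult_le_reg_r with (sqrt y); auto. rewrite Rinv_l; lra.
Qed.

Section MirrorStep.

Variables (a K c : R) (m : nat) (w w' d : nat -> R).

Hypotheses (Ha : 0 < a < 1 / 2) (Hm : (1 <= m)%nat) (HK : 0 <= K)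
  (Hw : forall k, (k < m)%nat -> 0 < w k) (Hw' : forall k, (k < m)%nat -> 0 < w' k)
  (Hsum : sumR m w = 1) (Hsum' : sumR m w' = 1)
  (Hupd : forall k, (k < m)%nat -> Rpower (w' k) (a - 1) = Rpower (w k) (a - 1) + d k - c)
  (Hd : forall k, (k < m)%nat -> - (K / w k) <= d k <= K)
  (Hfloor : forall k, (k < m)%nat -> 2 * K * Rpower (w k) (- a) <= (1 - 2 * a) / 6).

Lemma weight_le_1 (k : nat) : (k < m)%nat -> w k <= 1.
Proof.
  intros Hk. rewrite <- Hsum. apply sumR_ge_term; auto.
  intros; apply Rlt_le, Hw; auto.
Qed.

(* Otherwise every weight would strictly increase. *)
Lemma shift_le : c <= K.
Proof.
  destruct (Rle_or_lt c K) as [|HcK]; auto. exfalso.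
  enough (sumR m w < sumR m w') by lra.
  apply sumR_lt; auto. intros k Hk.
  apply (Rpower_antitone_lt_inv _ _ (a - 1)); [lra | auto|].
  rewrite Hupd by auto. destruct (Hd k Hk). lra.
Qed.

Lemma Rpower_step_lower (k : nat) : (k < m)%nat ->
  Rpower (w k) (a - 1) * (1 - 2 * K * Rpower (w k) (- a)) <= Rpower (w' k) (a - 1).
Proof.
  intros Hk. pose proof (Hw k Hk). pose proof (weight_le_1 k Hk).
  assert (HKw : Rpower (w k) (a - 1) * (2 * K * Rpower (w k) (- a)) = 2 * K / w k).
  { replace (Rpower (w k) (a - 1) * (2 * K * Rpower (w k) (- a)))
      with (2 * K * (Rpower (w k) (a - 1) * Rpower (w k) (- a))) by ring.
    rewrite <- Rpower_plus. replace (a - 1 + - a) with (- (1)) by ring.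
    rewrite Rpower_Ropp, Rpower_1 by auto. unfold Rdiv. ring. }
  assert (K <= K / w k).
  { unfold Rdiv. rewrite <- (Rmult_1_r K) at 1. apply Rmult_le_compat_l; auto.
    rewrite <- Rinv_1. apply Rinv_le_contravar; auto. }
  pose proof shift_le. destruct (Hd k Hk).
  rewrite Rmult_minus_distr_l, Rmult_1_r, HKw, Hupd by auto.
  unfold Rdiv in *. lra.
Qed.

Lemma step_growth (k : nat) : (k < m)%nat ->
  w' k <= w k + 12 * K * Rpower (w k) (1 - a) /\ w' k <= (2 - 2 * a) * w k.
Proof.
  intros Hk. pose proof (Hw k Hk). pose proof (Hfloor k Hk).
  set (x := 2 * K * Rpower (w k) (- a)) in *.
  assert (Hx : 0 <= x) by (unfold x; pose proof (exp_pos (- a * ln (w k))); unfold Rpower; nra).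
  assert (Hratio : w' k <= w k * (1 + 6 * x)).
  { apply (Rpower_antitone_le_inv _ _ (a - 1)); [lra | nra|].
    rewrite <- Rpower_mult_distr by (auto; lra).
    apply Rle_trans with (Rpower (w k) (a - 1) * (1 - x)); [|apply Rpower_step_lower; auto].
    apply Rmult_le_compat_l; [apply Rlt_le, exp_pos|].
    apply Rpower_1_plus_6x_le; lra. }
  assert (Hwx : w k * x = 2 * K * Rpower (w k) (1 - a)).
  { unfold x. replace (1 - a) with (1 + - a) by ring.
    rewrite Rpower_plus, Rpower_1 by auto. ring. }
  split; nra.
Qed.

(* Summing the tangent inequality of [t |-> t^(a-1)] at [w' k] over [k] gives
   [sum_k w'_k^(2-a) (d k - c) <= 0]; the power-mean bounds on the simplex
   then control [c]. *)
Lemma shift_ge : - (K * (2 - 2 * a) * INR m) <= c.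
Proof.
  set (P := fun k => Rpower (w' k) (1 - a)).
  set (V := fun k => Rpower (w' k) (2 - a)).
  assert (Hterm : forall k, (k < m)%nat ->
    - (K * (2 - 2 * a)) * P k + - c * V k <= (1 - a) * w k + - (1 - a) * w' k).
  { intros k Hk. pose proof (Hw k Hk). pose proof (Hw' k Hk).
    pose proof (Rpower_tangent_gap a (w k) (w' k) ltac:(lra) ltac:(auto) ltac:(auto)) as Ht.
    rewrite Hupd in Ht by auto. fold (V k) in Ht.
    assert (HV : V k = P k * w' k).
    { unfold V, P. replace (2 - a) with (1 - a + 1) by ring.
      rewrite Rpower_plus, Rpower_1 by auto. reflexivity. }
    assert (0 < P k) by apply exp_pos.
    destruct (Hd k Hk). destruct (step_growth k Hk) as [_ Hg].
    assert (K / w k * V k <= K * (2 - 2 * a) * P k).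
    { rewrite HV. unfold Rdiv.
      replace (K * / w k * (P k * w' k)) with (K * P k * (w' k / w k)) by (unfold Rdiv; ring).
      replace (K * (2 - 2 * a) * P k) with (K * P k * (2 - 2 * a)) by ring.
      apply Rmult_le_compat_l; [nra|].
      apply Rmult_le_reg_r with (w k); auto. unfold Rdiv.
      rewrite Rmult_assoc, Rinv_l by lra. lra. }
    assert (- (K / w k) * V k <= d k * V k)
      by (apply Rmult_le_compat_r; [apply Rlt_le, exp_pos | lra]).
    nra. }
  pose proof (sumR_le m _ _ Hterm) as Hs.
  rewrite !sumR_plus, !sumR_scal, Hsum, Hsum' in Hs.
  pose proof (sumR_Rpower_simplex_le m w' (1 - a) Hm Hw' Hsum' ltac:(lra)) as HP.
  pose proof (sumR_Rpower_simplex_ge m w' (2 - a) Hm Hw' Hsum' ltac:(lra)) as HV.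
  fold P in HP. fold V in HV.
  replace (1 - (1 - a)) with (1 + (a - 1)) in HP by ring.
  replace (1 - (2 - a)) with (a - 1) in HV by ring.
  assert (Hm0 : 0 < INR m) by (apply lt_0_INR; lia).
  rewrite Rpower_plus, Rpower_1 in HP by auto.
  set (Q := Rpower (INR m) (a - 1)) in *. assert (0 < Q) by apply exp_pos.
  assert (0 <= K * (2 - 2 * a)) by (apply Rmult_le_pos; lra).
  destruct (Rle_or_lt 0 c) as [|Hc]; [nra|].
  assert (- c * Q <= - c * sumR m V) by (apply Rmult_le_compat_l; lra).
  assert (K * (2 - 2 * a) * sumR m P <= K * (2 - 2 * a) * (INR m * Q))
    by (apply Rmult_le_compat_l; lra).
  apply Rmult_le_reg_r with Q; auto. nra.
Qed.

Lemma step_lower (i : nat) : (i < m)%nat ->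
  - 32 * Rpower (w i) (1 - a) * K <= w i - w' i.
Proof.
  intros Hi. destruct (step_growth i Hi) as [Hg _].
  pose proof (exp_pos ((1 - a) * ln (w i))). unfold Rpower in *. nra.
Qed.

Lemma Rpower_step_upper (i : nat) : (i < m)%nat ->
  Rpower (w' i) (a - 1) <= Rpower (w i) (a - 1) + K * (1 + (2 - 2 * a) * INR m).
Proof.
  intros Hi. pose proof shift_ge. destruct (Hd i Hi). rewrite Hupd by auto. lra.
Qed.

Lemma step_upper (i : nat) : (i < m)%nat ->
  w i - w' i <= 2 * Rpower (w i) (2 - a) * (INR m + 1) * K.
Proof.
  intros Hi. pose proof (Hw i Hi). pose proof (Hw' i Hi).
  pose proof (Rpower_tangent_gap a (w' i) (w i) ltac:(lra) ltac:(auto) ltac:(auto)) as Ht.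
  pose proof (Rpower_step_upper i Hi) as Hu.
  set (W := Rpower (w i) (2 - a)) in *. assert (0 < W) by apply exp_pos.
  assert (Hm0 : 0 <= INR m) by apply pos_INR.
  assert (W * (Rpower (w' i) (a - 1) - Rpower (w i) (a - 1))
          <= W * (K * (1 + (2 - 2 * a) * INR m))) by (apply Rmult_le_compat_l; lra).
  assert (K * (1 + (2 - 2 * a) * INR m) <= (1 - a) * (2 * (INR m + 1) * K)) by nra.
  apply Rmult_le_reg_l with (1 - a); [lra|]. nra.
Qed.

End MirrorStep.

Definition weight_floor (a : R) (m T : nat) : R :=
  1 / (10 * sqrt (INR m)) * Rpower (INR T) (1 / (2 * (a - 1))).

Lemma eventually_gt_INR (X : R) : eventually (fun T => X < INR T).
Proof.
  destruct (INR_unbounded X) as [N HN]. exists N. intros T HT.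
  apply le_INR in HT. lra.
Qed.

Lemma eventually_le_Rpower (C b : R) : 0 < b -> eventually (fun T => C <= Rpower (INR T) b).
Proof.
  intros Hb. set (C' := Rmax C 1).
  assert (HC' : 0 < C') by (unfold C'; pose proof (Rmax_r C 1); lra).
  apply (filter_imp (fun T => Rpower C' (/ b) < INR T)); [|apply eventually_gt_INR].
  intros T HT. apply Rle_trans with C'; [apply Rmax_l|].
  replace C' with (Rpower (Rpower C' (/ b)) b)
    by (rewrite Rpower_mult, Rinv_l, Rpower_1; lra).
  apply Rle_Rpower_l; [lra | split; [apply exp_pos | lra]].
Qed.

Lemma eta_gamma_eq (a : R) (m n T : nat) : (1 <= m)%nat -> (1 <= n)%nat -> 1 < INR T ->
  eta_par a m n T * gamma_par n T = / (sqrt (INR T) * Rpower (INR m) ((1 + a) / 2)).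
Proof.
  intros Hm Hn HT.
  assert (0 < INR n) by (apply lt_0_INR; lia).
  assert (0 < ln (INR T)) by (rewrite <- ln_1; apply ln_increasing; lra).
  assert (0 < sqrt (INR T)) by (apply sqrt_lt_R0; lra).
  assert (0 < Rpower (INR m) ((1 + a) / 2)) by apply exp_pos.
  unfold eta_par, gamma_par. field. repeat split; lra.
Qed.

Lemma Rpower_weight_floor (a : R) (m T : nat) (q : R) : (1 <= m)%nat -> 0 < INR T -> a <> 1 ->
  Rpower (weight_floor a m T) q
  = Rpower (10 * sqrt (INR m)) (- q) * Rpower (INR T) (q / (2 * (a - 1))).
Proof.
  intros Hm HT Ha.
  assert (0 < 10 * sqrt (INR m))
    by (pose proof (sqrt_lt_R0 (INR m) ltac:(apply lt_0_INR; lia)); lra).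
  unfold weight_floor. rewrite <- Rpower_mult_distr, Rpower_mult.
  - unfold Rpower, Rdiv. rewrite Rmult_1_l, ln_Rinv by lra. do 2 f_equal; field; lra.
  - apply Rdiv_lt_0_compat; lra.
  - apply exp_pos.
Qed.

Lemma eventually_step_sizes (a : R) (m n : nat) : (1 <= m)%nat -> (1 <= n)%nat ->
  eventually (fun T => 0 < eta_par a m n T /\ 1 <= gamma_par n T).
Proof.
  intros Hm Hn. apply (filter_imp (fun T => 2 < INR T)); [|apply eventually_gt_INR].
  intros T HT.
  assert (Hn1 : 1 <= INR n) by (apply (le_INR 1); lia).
  assert (Hln : / 2 < ln (INR T))
    by (apply Rlt_trans with (ln 2); [apply ln_lt_2 | apply ln_increasing; lra]).
  assert (Hgam : 1 <= gamma_par n T) by (unfold gamma_par; nra).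
  split; [|auto].
  assert (HK := eta_gamma_eq a m n T Hm Hn ltac:(lra)).
  assert (0 < / (sqrt (INR T) * Rpower (INR m) ((1 + a) / 2))).
  { apply Rinv_0_lt_compat, Rmult_lt_0_compat; [apply sqrt_lt_R0; lra | apply exp_pos]. }
  nra.
Qed.

(* [2 K L^(-a)] decays like [T^(-(1 - 2a) / (2 (1 - a)))]. *)
Lemma eventually_floor_small (a : R) (m n : nat) : 0 < a < 1 / 2 -> (1 <= m)%nat -> (1 <= n)%nat ->
  eventually (fun T => 2 * (eta_par a m n T * gamma_par n T) * Rpower (weight_floor a m T) (- a)
                       <= (1 - 2 * a) / 6).
Proof.
  intros Ha Hm Hn.
  set (X := 10 * sqrt (INR m)). set (M := Rpower (INR m) ((1 + a) / 2)).
  set (b := (1 - 2 * a) / (2 * (1 - a))).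
  set (C := 2 * Rpower X a / (M * ((1 - 2 * a) / 6))).
  assert (HM : 0 < M) by apply exp_pos. assert (HXa : 0 < Rpower X a) by apply exp_pos.
  apply (filter_imp (fun T => 1 < INR T /\ C <= Rpower (INR T) b));
    [|apply filter_and; [apply eventually_gt_INR | apply eventually_le_Rpower; unfold b;
                         apply Rdiv_lt_0_compat; lra]].
  intros T [HT HC].
  assert (Hs : 0 < sqrt (INR T)) by (apply sqrt_lt_R0; lra).
  assert (Hb : 0 < Rpower (INR T) b) by apply exp_pos.
  rewrite eta_gamma_eq, Rpower_weight_floor by (auto; lra). fold X M.
  replace (- - a) with a by ring.
  assert (Hexp : Rpower (INR T) (- a / (2 * (a - 1))) = sqrt (INR T) * / Rpower (INR T) b).
  { rewrite <- Rpower_sqrt, <- Rpower_Ropp, <- Rpower_plus by lra.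
    f_equal. unfold b. field. lra. }
  rewrite Hexp.
  replace (2 * / (sqrt (INR T) * M) * (Rpower X a * (sqrt (INR T) * / Rpower (INR T) b)))
    with (2 * Rpower X a / M * / Rpower (INR T) b) by (field; lra).
  assert (HC0 : 0 < C) by (unfold C; apply Rdiv_lt_0_compat; [|apply Rmult_lt_0_compat]; lra).
  replace ((1 - 2 * a) / 6) with (2 * Rpower X a / M * / C) by (unfold C; field; lra).
  apply Rmult_le_compat_l; [apply Rlt_le, Rdiv_lt_0_compat; lra|].
  apply Rinv_le_contravar; auto.
Qed.

(* [T K (1 + 2 m) = sqrt T (1 + 2 m) / m^((1+a)/2)] while
   [L^(a-1) = (10 sqrt m)^(1-a) sqrt T], and [(10 sqrt m)^(1-a) m^((1+a)/2) = 10^(1-a) m > 3 m]. *)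
Lemma eventually_budget (a : R) (m n : nat) : 0 < a < 1 / 2 -> (1 <= m)%nat -> (1 <= n)%nat ->
  eventually (fun T => Rpower (INR m) (1 - a)
                       + INR T * (eta_par a m n T * gamma_par n T) * (1 + 2 * INR m)
                       <= Rpower (weight_floor a m T) (a - 1)).
Proof.
  intros Ha Hm Hn.
  assert (Hm1 : 1 <= INR m) by (apply (le_INR 1); lia).
  set (X := 10 * sqrt (INR m)). set (M := Rpower (INR m) ((1 + a) / 2)).
  assert (HM : 0 < M) by apply exp_pos.
  assert (HXM : Rpower X (1 - a) * M = Rpower 10 (1 - a) * INR m).
  { assert (0 < sqrt (INR m)) by (apply sqrt_lt_R0; lra).
    unfold X, M. rewrite <- Rpower_mult_distr, <- Rpower_sqrt, Rpower_mult by lra.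
    rewrite Rmult_assoc, <- Rpower_plus.
    replace (/ 2 * (1 - a) + (1 + a) / 2) with 1 by field. rewrite Rpower_1; lra. }
  assert (H10 : 3 < Rpower 10 (1 - a)).
  { apply Rlt_le_trans with (Rpower 10 (/ 2)); [|apply Rle_Rpower; lra].
    rewrite Rpower_sqrt by lra.
    pose proof (sqrt_sqrt 10 ltac:(lra)). pose proof (sqrt_pos 10). nra. }
  set (D := Rpower X (1 - a) - (1 + 2 * INR m) / M).
  assert (HD : 0 < D).
  { unfold D. apply Rmult_lt_reg_r with M; auto.
    rewrite Rmult_minus_distr_r, HXM. unfold Rdiv. rewrite Rmult_assoc, Rinv_l by lra. nra. }
  apply (filter_imp (fun T => 1 < INR T /\ Rpower (INR m) (1 - a) / D <= Rpower (INR T) (/ 2)));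
    [|apply filter_and; [apply eventually_gt_INR | apply eventually_le_Rpower; lra]].
  intros T [HT HB].
  rewrite Rpower_sqrt in HB by lra.
  assert (Hs : 0 < sqrt (INR T)) by (apply sqrt_lt_R0; lra).
  assert (HTs : INR T = sqrt (INR T) * sqrt (INR T)) by (rewrite sqrt_sqrt; lra).
  rewrite eta_gamma_eq, Rpower_weight_floor by (auto; lra). fold X M.
  replace (- (a - 1)) with (1 - a) by ring.
  replace ((a - 1) / (2 * (a - 1))) with (/ 2) by (field; lra).
  rewrite Rpower_sqrt by lra.
  replace (INR T * / (sqrt (INR T) * M) * (1 + 2 * INR m))
    with (sqrt (INR T) * ((1 + 2 * INR m) / M))
    by (set (s := sqrt (INR T)) in *; rewrite HTs; field; lra).
  apply Rmult_le_compat_r with (r := D) in HB; [|lra].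
  unfold Rdiv in HB. rewrite Rmult_assoc, Rinv_l, Rmult_1_r in HB by lra.
  unfold D in HB. lra.
Qed.

Section Run.

Variables (a : R) (m n T : nat) (p : nat -> nat -> nat -> R) (j : nat -> nat)
  (w : nat -> nat -> R) (e : nat -> R).

Let eta := eta_par a m n T.
Let K := eta * gamma_par n T.
Let L := weight_floor a m T.

Hypotheses (Ha : 0 < a < 1 / 2) (Hm : (1 <= m)%nat)
  (Hrun : is_run a m n T p j w e) (Hsg : small_gradient m n T p j w)
  (Heta : 0 < eta) (Hgam : 1 <= gamma_par n T)
  (Hfloor_small : 2 * K * Rpower L (- a) <= (1 - 2 * a) / 6)
  (Hbudget : Rpower (INR m) (1 - a) + INR T * K * (1 + 2 * INR m) <= Rpower L (a - 1)).

Lemma floor_pos : 0 < L.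
Proof.
  apply Rmult_lt_0_compat; [|apply exp_pos].
  apply Rdiv_lt_0_compat; [lra|].
  pose proof (sqrt_lt_R0 (INR m) ltac:(apply lt_0_INR; lia)). lra.
Qed.

Lemma above_floor_bounds (y : R) : L <= y ->
  2 * K * Rpower y (- a) <= (1 - 2 * a) / 6 /\ eta <= 4 * K <= Rpower y a.
Proof.
  intros Hy. pose proof floor_pos.
  assert (HK : 0 < K) by (unfold K; nra).
  assert (Hsmall : 2 * K * Rpower y (- a) <= (1 - 2 * a) / 6).
  { apply Rle_trans with (2 := Hfloor_small), Rmult_le_compat_l; [lra|].
    apply Rpower_antitone_le; lra. }
  assert (Hyy : Rpower y a * Rpower y (- a) = 1)
    by (rewrite <- Rpower_plus, Rplus_opp_r; apply Rpower_O; lra).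
  pose proof (exp_pos (a * ln y)). pose proof (exp_pos (- a * ln y)).
  unfold Rpower in *. unfold K in *. repeat split; nra.
Qed.

Lemma eta_cand_above_floor (t : nat) : (forall i, (i < m)%nat -> L <= w t i) ->
  eta_cand a m n T (w t) = eta.
Proof.
  intros Ht. unfold eta_cand. fold eta.
  destruct (Rle_dec eta (minR m (fun i => Rpower (w t i) a))) as [|Hnot]; auto.
  exfalso. apply Hnot, minR_ge; auto. intros i Hi.
  destruct (above_floor_bounds _ (Ht i Hi)) as [_ [? ?]]. lra.
Qed.

Let potential (k : nat) : R := Rpower (INR m) (1 - a) + INR k * K * (1 + 2 * INR m).

Lemma above_floor_of_potential (k : nat) (y : R) : (k <= T)%nat -> 0 < y ->
  Rpower y (a - 1) <= potential k -> L <= y.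
Proof.
  intros Hk Hy Hp. apply (Rpower_antitone_le_inv _ _ (a - 1)); [lra | auto|].
  apply Rle_trans with (1 := Hp), Rle_trans with (2 := Hbudget). unfold potential.
  apply le_INR in Hk. assert (0 <= K * (1 + 2 * INR m)).
  { pose proof (pos_INR m). unfold K. apply Rmult_le_pos; nra. }
  nra.
Qed.

Lemma run_step (t : nat) : (1 <= t <= T)%nat ->
  (forall i, (i < m)%nat -> 0 < w t i) -> sumR m (w t) = 1 ->
  (forall i, (i < m)%nat -> L <= w t i) -> e t = eta ->
  forall i, (i < m)%nat ->
    - 32 * Rpower (w t i) (1 - a) * K <= w t i - w (S t) i /\
    w t i - w (S t) i <= 2 * Rpower (w t i) (2 - a) * (INR m + 1) * K /\
    Rpower (w (S t) i) (a - 1) <= Rpower (w t i) (a - 1) + K * (1 + 2 * INR m).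
Proof.
  intros Ht Hpos Hsum Hfloor Het i Hi.
  destruct Hrun as (_ & _ & _ & Hupd).
  destruct (Hupd t Ht) as (Hpos' & Hsum' & c & Hc).
  set (d := fun k => eta * dL m n (p t) (j t) (w t) k).
  assert (HK : 0 <= K) by (unfold K; nra).
  assert (Hupd' : forall k, (k < m)%nat ->
    Rpower (w (S t) k) (a - 1) = Rpower (w t k) (a - 1) + d k - c)
    by (intros k Hk; specialize (Hc k Hk); unfold d; rewrite <- Het; lra).
  assert (Hd : forall k, (k < m)%nat -> - (K / w t k) <= d k <= K).
  { intros k Hk. destruct (Hsg t k Ht Hk) as (_ & Hlo & Hhi). pose proof (Hpos k Hk).
    unfold d, K. unfold Rdiv in *. split; [|apply Rmult_le_compat_l; lra].
    replace (- (eta * gamma_par n T * / w t k)) with (eta * - (gamma_par n T * / w t k))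
      by ring.
    apply Rmult_le_compat_l; lra. }
  assert (Hsmall : forall k, (k < m)%nat -> 2 * K * Rpower (w t k) (- a) <= (1 - 2 * a) / 6)
    by (intros k Hk; apply above_floor_bounds, Hfloor, Hk).
  split; [|split].
  - exact (step_lower a K c m (w t) (w (S t)) d Ha Hm HK Hpos Hpos' Hsum Hsum'
             Hupd' Hd Hsmall i Hi).
  - exact (step_upper a K c m (w t) (w (S t)) d Ha Hm HK Hpos Hpos' Hsum Hsum'
             Hupd' Hd Hsmall i Hi).
  - pose proof (Rpower_step_upper a K c m (w t) (w (S t)) d Ha Hm HK Hpos Hpos' Hsum Hsum'
                  Hupd' Hd Hsmall i Hi).
    assert (0 <= K * (a * INR m)) by (pose proof (pos_INR m); apply Rmult_le_pos; nra).
    nra.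
Qed.

Lemma run_invariant (k : nat) : (k < T)%nat ->
  (forall i, (i < m)%nat -> 0 < w (S k) i) /\ sumR m (w (S k)) = 1 /\
  (forall i, (i < m)%nat -> Rpower (w (S k) i) (a - 1) <= potential k) /\ e (S k) = eta.
Proof.
  destruct Hrun as (_ & Hinit & Hstep & Hupd).
  assert (Hm0 : 0 < INR m) by (apply lt_0_INR; lia).
  induction k as [|k IH]; intros Hk.
  - assert (Hpos : forall i, (i < m)%nat -> 0 < w 1%nat i)
      by (intros i Hi; rewrite Hinit by auto; apply Rdiv_lt_0_compat; lra).
    assert (Hpot : forall i, (i < m)%nat -> Rpower (w 1%nat i) (a - 1) <= potential 0).
    { intros i Hi. rewrite Hinit by auto. unfold potential, Rpower, Rdiv.
      rewrite Rmult_1_l, ln_Rinv by auto. simpl INR.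
      replace ((a - 1) * - ln (INR m)) with ((1 - a) * ln (INR m)) by ring. lra. }
    split; [|split; [|split]]; auto.
    + rewrite (sumR_ext _ _ (fun _ => 1 / INR m)), sumR_const by auto. field. lra.
    + rewrite Hstep by lia. apply eta_cand_above_floor. intros i Hi.
      apply (above_floor_of_potential 0); auto; lia.
  - destruct (IH ltac:(lia)) as (Hpos & Hsum & Hpot & Het).
    assert (Hfloor : forall i, (i < m)%nat -> L <= w (S k) i)
      by (intros i Hi; apply (above_floor_of_potential k); auto; lia).
    destruct (Hupd (S k) ltac:(lia)) as (Hpos' & Hsum' & _).
    assert (Hpot' : forall i, (i < m)%nat -> Rpower (w (S (S k)) i) (a - 1) <= potential (S k)).
    { intros i Hi. destruct (run_step (S k) ltac:(lia) Hpos Hsum Hfloor Het i Hi) as (_ & _ & H).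
      specialize (Hpot i Hi). unfold potential in *. rewrite S_INR. lra. }
    split; [|split; [|split]]; auto.
    rewrite Hstep by lia. simpl. rewrite Het, eta_cand_above_floor.
    + apply Rmin_left, Rle_refl.
    + intros i Hi. apply (above_floor_of_potential (S k)); auto; lia.
Qed.

Lemma run_bounds (i t : nat) : (i < m)%nat -> (1 <= t <= T)%nat ->
  (Rpower (w t i) a >= 4 * eta * gamma_par n T /\ w t i >= L) /\
  (- 32 * Rpower (w t i) (1 - a) * eta * gamma_par n T <= w t i - w (S t) i /\
   w t i - w (S t) i <= 2 * Rpower (w t i) (2 - a) * (INR m + 1) * eta * gamma_par n T).
Proof.
  intros Hi Ht. destruct t as [|k]; [lia|].
  destruct (run_invariant k ltac:(lia)) as (Hpos & Hsum & Hpot & Het).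
  assert (Hfloor : forall i, (i < m)%nat -> L <= w (S k) i)
    by (intros i' Hi'; apply (above_floor_of_potential k); auto; lia).
  destruct (run_step (S k) Ht Hpos Hsum Hfloor Het i Hi) as (Hlo & Hhi & _).
  destruct (above_floor_bounds _ (Hfloor i Hi)) as [_ [_ Ha4]].
  unfold K in *. split; split; try apply Rle_ge; auto; lra.
Qed.

End Run.

Theorem corollary1 (alpha : R) (m n : nat) :
  0 < alpha < 1 / 2 -> (1 <= m)%nat -> (1 <= n)%nat ->
  exists T0 : nat, forall (T : nat), (T0 <= T)%nat ->
  forall (p : nat -> nat -> nat -> R) (j : nat -> nat)
         (w : nat -> nat -> R) (e : nat -> R),
    is_run alpha m n T p j w e ->
    small_gradient m n T p j w ->
    forall i t, (i < m)%nat -> (1 <= t <= T)%nat ->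
      (Rpower (w t i) alpha >= 4 * eta_par alpha m n T * gamma_par n T /\
       w t i >= 1 / (10 * sqrt (INR m)) * Rpower (INR T) (1 / (2 * (alpha - 1)))) /\
      (- 32 * Rpower (w t i) (1 - alpha) * eta_par alpha m n T * gamma_par n T
         <= w t i - w (S t) i /\
       w t i - w (S t) i
         <= 2 * Rpower (w t i) (2 - alpha) * (INR m + 1) * eta_par alpha m n T * gamma_par n T).
Proof.
  intros Ha Hm Hn.
  destruct (filter_and _ _ (eventually_step_sizes alpha m n Hm Hn)
              (filter_and _ _ (eventually_floor_small alpha m n Ha Hm Hn)
                 (eventually_budget alpha m n Ha Hm Hn))) as [T0 HT0].
  exists T0. intros T HT p j w e Hrun Hsg i t Hi Ht.
  destruct (HT0 T HT) as ((Heta & Hgam) & Hsmall & Hbudget).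
  exact (run_bounds alpha m n T p j w e Ha Hm Hrun Hsg Heta Hgam Hsmall Hbudget i t Hi Ht).
Qed.
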